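(* Let $1\le m\le n$ be integers and $\sigma_1^2,\dots,\sigma_n^2>0$. The optimal value of the problem \[ \max_\eta\ \sum_{M\subset[n]:|M|=m}\Big(\sum_{l\in M}\eta_{M\setminus\{l\}}\sigma_l^2\Big)\,\mathrm{Ent}\big(\{\eta_{M\setminus\{l\}}\sigma_l^2\}_{l\in M}\big) \] subject to $\sum_{F\subset[n]:|F|=m-1}\eta_F=1$, $\eta_F\ge0$ for all $F\subset[n]$ with $|F|=m-1$, is at least $\frac13\sum_{j\in G^{m}}\sigma_j^2\ln(m)$.
   Context: For a nonnegative vector $a$, $\mathrm{Ent}(a)=-\sum_i\hat a_i\ln\hat a_i$ with $\hat a_i=a_i/\sum_ja_j$ and $0\ln 0=0$ (a term whose vector is identically zero contributes $0$). Let $\underline\sigma^2=\min_i\sigma_i^2$, $G_j=\{i\in[n]:2^{j-1}\le\sigma_i^2/\underline\sigma^2<2^j\}$ for $j=1,\dots,k$ covering $[n]$, and $G^{m}=\bigcup_{j:|G_j|>2m}G_j$. *)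

From HB Require Import structures.
From mathcomp Require Import all_boot all_order all_algebra.
From mathcomp Require Import reals exp.
Set Implicit Arguments. Unset Strict Implicit. Unset Printing Implicit Defensive.
Import Order.TTheory GRing.Theory Num.Theory.
Local Open Scope ring_scope.

Definition Ent (R : realType) (I : finType) (A : {set I}) (a : I -> R) : R :=
  let S := \sum_(j in A) a j in
  - \sum_(i in A) (if a i == 0 then 0 else (a i / S) * ln (a i / S)).

(* underline sigma^2 = min_i sigma_i^2 (n = 0 never arises: n >= 1). *)
Definition sigmin (R : realType) (n : nat) : ('I_n -> R) -> R :=
  match n return ('I_n -> R) -> R with
  | 0 => fun _ => 0
  | n'.+1 => fun s => \big[Num.min/s ord0]_(i < n'.+1) s i
  end.

Definition Gj (R : realType) (n : nat) (s : 'I_n -> R) (j : nat) : {set 'I_n} :=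
  [set i | (2 ^+ j.-1 <= s i / sigmin s) && (s i / sigmin s < 2 ^+ j)].

Definition Gm (R : realType) (n : nat) (s : 'I_n -> R) (k m : nat) : {set 'I_n} :=
  \bigcup_(1 <= j < k.+1 | (2 * m < #|Gj s j|)%N) Gj s j.

Definition objective (R : realType) (n m : nat) (s : 'I_n -> R)
    (eta : {set 'I_n} -> R) : R :=
  \sum_(M : {set 'I_n} | #|M| == m)
     (\sum_(l in M) eta (M :\ l) * s l) * Ent M (fun l => eta (M :\ l) * s l).

From HB Require Import structures.
From mathcomp Require Import all_boot all_order all_algebra.
From mathcomp Require Import reals exp.
From mathcomp Require Import lra zify.
Set Implicit Arguments. Unset Strict Implicit. Unset Printing Implicit Defensive.
Import Order.TTheory GRing.Theory Num.Theory.
Local Open Scope ring_scope.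

(* Take eta_F proportional to prod_(i in F) sigma_i^2. Then
   eta_(M \ l) sigma_l^2 = prod_(i in M) sigma_i^2 / Z does not depend on l, so
   every entropy in the objective is ln m, and double counting the pairs (M, l)
   turns the objective into ln m * sum_F eta_F sum_(l notin F) sigma_l^2. As eta
   is a probability vector it remains to bound sum_(l notin F) sigma_l^2 below
   by 1/3 of the mass of G^m for every (m-1)-set F. Within one class G_j the
   sigma_i^2 differ by less than a factor 2, and a class of G^m has more than 2m
   elements, hence at least |F| of them outside F: so the mass of G^m inside F
   is at most twice its mass outside F. *)

Lemma ler_sum_subset (R : numDomainType) (I : finType) (A B : {pred I})
    (f : I -> R) :
  {subset A <= B} -> (forall i, i \in B -> 0 <= f i) ->
  \sum_(i in A) f i <= \sum_(i in B) f i.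
Proof.
move=> sAB f0; rewrite [X in X <= _]big_mkcond [X in _ <= X]big_mkcond /=.
apply: ler_sum => i _; case: ifP => [/sAB -> //|_].
by case: ifP => // /f0.
Qed.

Lemma sum_le_of_card_mul_le (R : realFieldType) (I : finType) (A : {set I})
    (f : I -> R) (c : R) :
  0 <= c -> (forall x, x \in A -> #|A|%:R * f x <= c) ->
  \sum_(x in A) f x <= c.
Proof.
move=> c0 hA; have [->|/set0Pn[x0 xA0]] := eqVneq A set0; first by rewrite big_set0.
have cardA : (0 : R) < #|A|%:R by rewrite ltr0n card_gt0; apply/set0Pn; exists x0.
apply: (@le_trans _ _ (\sum_(x in A) c / #|A|%:R)).
  by apply: ler_sum => x xA; rewrite ler_pdivlMr // mulrC hA.
by rewrite sumr_const -[_ *+ _]mulr_natr divfK ?gt_eqF.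
Qed.

Lemma exists_set_card (T : finType) (k : nat) :
  (k <= #|T|)%N -> exists A : {set T}, #|A| = k.
Proof.
move=> kT; exists [set x in take k (enum T)]; rewrite cardsE.
by rewrite (card_uniqP _) ?take_uniq ?enum_uniq // size_takel // -cardT.
Qed.

Lemma sum_setD1_card (V : nmodType) (T : finType) (m : nat)
    (f : {set T} -> T -> V) :
  \sum_(M : {set T} | #|M| == m.+1) \sum_(l in M) f (M :\ l) l =
  \sum_(F : {set T} | #|F| == m) \sum_(l | l \notin F) f F l.
Proof.
rewrite (exchange_big_dep xpredT) //= [RHS](exchange_big_dep xpredT) //=.
apply: eq_bigr => l _.
rewrite (reindex_onto (fun F => l |: F) (fun M => M :\ l)); last first.
  by move=> M /andP[_ lM]; rewrite setD1K.
apply: eq_big => [F|F /andP[_ /eqP -> //]].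
have [lF|lF] := boolP (l \in F).
  rewrite andbF; apply/negbTE/negP => /andP[_ /eqP eF].
  by move: lF; rewrite -eF !inE eqxx.
by rewrite setU1K // eqxx cardsU1 lF setU11 !andbT eqSS.
Qed.

Lemma Ent_const (R : realType) (I : finType) (A : {set I}) (a : I -> R) (c : R) :
  0 < c -> (forall i, i \in A -> a i = c) -> Ent A a = ln #|A|%:R.
Proof.
move=> c0 aA; have [->|A0] := eqVneq A set0.
  by rewrite /Ent big_set0 cards0 oppr0 ln0.
have N0 : (0 : R) < #|A|%:R by rewrite ltr0n card_gt0.
have hat_a : c / (c *+ #|A|) = #|A|%:R^-1.
  by rewrite -[c *+ _]mulr_natr invfM mulrA divff ?mul1r ?gt_eqF.
rewrite /Ent (eq_bigr (fun=> c) aA) sumr_const.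
rewrite (eq_bigr (fun=> #|A|%:R^-1 * ln (#|A|%:R^-1 : R))); last first.
  by move=> i iA; rewrite aA // gt_eqF // hat_a.
rewrite sumr_const lnV ?posrE // -[_ *+ _]mulr_natr mulrN mulNr opprK.
by rewrite mulrAC mulVf ?gt_eqF // mul1r.
Qed.

Lemma sigmin_gt0 (R : realType) (n : nat) (s : 'I_n -> R) :
  (0 < n)%N -> (forall i, 0 < s i) -> 0 < sigmin s.
Proof.
case: n s => [|n] s // _ s_gt0 /=.
by apply: (big_ind (fun x => 0 < x)) => // x y x0 y0; rewrite lt_min x0 y0.
Qed.

Section DyadicClasses.

Variables (R : realType) (n k m : nat) (s : 'I_n -> R).
Hypotheses (sigmin_pos : 0 < sigmin s) (s_ge0 : forall i, 0 <= s i).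

Lemma Gj_lt_double j x y : x \in Gj s j -> y \in Gj s j -> s x < 2 * s y.
Proof.
rewrite !inE => /andP[_ x_lt] /andP[y_ge _].
have pow2S : (2 : R) ^+ j <= 2 * 2 ^+ j.-1.
  by case: j {x_lt y_ge} => [|j]; rewrite ?expr0 ?exprS //= mulr1 ler1n.
have : s x / sigmin s < 2 * s y / sigmin s.
  by rewrite -mulrA; apply: (lt_le_trans x_lt); apply: le_trans pow2S _; rewrite ler_pM2l.
by rewrite ltr_pM2r ?invr_gt0.
Qed.

Lemma GmP x :
  reflect (exists2 j, (1 <= j <= k)%N && (2 * m < #|Gj s j|)%N & x \in Gj s j)
          (x \in Gm s k m).
Proof.
rewrite /Gm big_geq_mkord; apply: (iffP bigcupP) => [[j /andP[big_j j_gt0] xj]|].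
  by exists j => //; rewrite j_gt0 big_j -ltnS ltn_ord.
case=> j /andP[/andP[j_gt0 j_le] big_j] xj.
by exists (Ordinal (j_le : (j < k.+1)%N)); rewrite //= big_j.
Qed.

Lemma card_mul_le_sum_Gm_setD (F : {set 'I_n}) x :
  (#|F| <= m)%N -> x \in Gm s k m ->
  #|F|%:R * s x <= 2 * \sum_(l in Gm s k m :\: F) s l.
Proof.
move=> F_le /GmP[j /andP[j_range big_j] xj].
set B := Gj s j :\: F.
have F_le_B : (#|F| <= #|B|)%N.
  by rewrite cardsD; have := subset_leq_card (subsetIr (Gj s j) F); lia.
apply: (@le_trans _ _ (#|B|%:R * s x)); first by rewrite ler_wpM2r ?ler_nat.
rewrite mulr_natl -sumr_const; apply: (@le_trans _ _ (\sum_(y in B) 2 * s y)).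
  by apply: ler_sum => y /setDP[yj _]; apply/ltW/(Gj_lt_double xj).
rewrite -mulr_sumr ler_wpM2l //; apply: ler_sum_subset => [y /setDP[yj yF]|//].
by rewrite inE yF; apply/GmP; exists j; rewrite ?j_range.
Qed.

Lemma sum_Gm_le_compl (F : {set 'I_n}) :
  (#|F| <= m)%N -> \sum_(j in Gm s k m) s j <= 3 * \sum_(l | l \notin F) s l.
Proof.
move=> F_le; set O := \sum_(l in Gm s k m :\: F) s l.
have O_le : O <= \sum_(l | l \notin F) s l.
  by apply: ler_sum_subset => [l /setDP[]|l _] //; rewrite inE.
have I_le : \sum_(l in Gm s k m :&: F) s l <= 2 * O.
  apply: sum_le_of_card_mul_le => [|x /setIP[xG xF]].
    by rewrite mulr_ge0 // sumr_ge0.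
  apply: le_trans (card_mul_le_sum_Gm_setD F_le xG).
  by rewrite ler_wpM2r ?ler_nat ?subset_leq_card ?subsetIr.
rewrite (big_setID F) /= -/O; lra.
Qed.

End DyadicClasses.

Section ProductWeights.

Variables (R : realType) (n m : nat) (s : 'I_n -> R).
Hypothesis s_gt0 : forall i, 0 < s i.

Definition prod_norm : R :=
  \sum_(F : {set 'I_n} | #|F| == m) \prod_(i in F) s i.

Definition prod_weight (F : {set 'I_n}) : R := (\prod_(i in F) s i) / prod_norm.

Let prod_ge0 (F : {set 'I_n}) : 0 <= \prod_(i in F) s i.
Proof. by apply: prodr_ge0 => i _; apply: ltW. Qed.

Lemma prod_norm_gt0 : (m <= n)%N -> 0 < prod_norm.
Proof.
rewrite -{1}(card_ord n) => /exists_set_card[F F_card].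
rewrite /prod_norm (bigD1 F) ?F_card //=.
by rewrite ltr_pwDl ?prodr_gt0 // sumr_ge0.
Qed.

Lemma prod_weight_ge0 F : 0 <= prod_weight F.
Proof. by rewrite divr_ge0 // sumr_ge0. Qed.

Lemma sum_prod_weight : (m <= n)%N ->
  \sum_(F : {set 'I_n} | #|F| == m) prod_weight F = 1.
Proof. by move=> m_le; rewrite -mulr_suml divff // gt_eqF // prod_norm_gt0. Qed.

Lemma prod_weight_setD1 (M : {set 'I_n}) l :
  l \in M -> prod_weight (M :\ l) * s l = (\prod_(i in M) s i) / prod_norm.
Proof.
by move=> lM; rewrite /prod_weight (big_setD1 l lM) /= mulrAC [_ * s l]mulrC.
Qed.

Lemma objective_prod_weight : (m <= n)%N ->
  objective m.+1 s prod_weight =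
  ln m.+1%:R * \sum_(F : {set 'I_n} | #|F| == m)
                 prod_weight F * \sum_(l | l \notin F) s l.
Proof.
move=> m_le; rewrite /objective.
rewrite (eq_bigr (fun M : {set 'I_n} =>
  (\sum_(l in M) prod_weight (M :\ l) * s l) * ln m.+1%:R)).
  rewrite -mulr_suml (sum_setD1_card _ (fun F l => prod_weight F * s l)).
  rewrite mulrC; congr (_ * _).
  by apply: eq_bigr => F _; rewrite mulr_sumr.
move=> M /eqP M_card.
rewrite -M_card (@Ent_const _ _ _ _ (\prod_(i in M) s i / prod_norm)) //.
  by rewrite divr_gt0 ?prodr_gt0 ?prod_norm_gt0.
exact: prod_weight_setD1.
Qed.

End ProductWeights.

Theorem lemma6 (R : realType) (n m k : nat) (s : 'I_n -> R)
  (hm1 : (1 <= m)%N) (hmn : (m <= n)%N)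
  (hs : forall i, 0 < s i)
  (hcover : forall i : 'I_n, exists j : nat, (1 <= j <= k)%N /\ i \in Gj s j) :
  exists eta : {set 'I_n} -> R,
    [/\ \sum_(F : {set 'I_n} | #|F| == m.-1) eta F = 1,
        (forall F : {set 'I_n}, #|F| = m.-1 -> 0 <= eta F) &
        1 / 3 * \sum_(j in Gm s k m) s j * ln (m%:R : R) <= objective m s eta].
Proof.
case: m hm1 hmn => [//|m] _ m_lt /=.
have m_le : (m <= n)%N by exact: ltnW.
have sigmin_pos : 0 < sigmin s by apply: sigmin_gt0 => //; exact: leq_ltn_trans m_lt.
exists (prod_weight m s); split; first exact: sum_prod_weight.
  by move=> F _; exact: prod_weight_ge0.
rewrite objective_prod_weight // -mulr_suml mulrA mulrC ler_wpM2l ?ln_ge0 ?ler1n //.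
rewrite -[leLHS]mul1r -{1}(sum_prod_weight hs m_le) mulr_suml.
apply: ler_sum => F /eqP F_card; rewrite ler_wpM2l ?prod_weight_ge0 //.
rewrite mul1r mulrC ler_pdivrMr // mulrC.
have s_ge0 i : 0 <= s i by exact: ltW.
exact: (sum_Gm_le_compl k sigmin_pos s_ge0 (leqW (eq_leq F_card))).
Qed.
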